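(* Let $D$ be an $n\times n$ distance matrix and let $\mathbf X$ be a truth assignment of the variables $\{x_{i,a}: i\in[n],\ a\in\{n+1,n+2\}\}$ satisfying $\phi_2'$. Then $D'(\phi_2',\mathbf X)=D^{(3)}$.
   Context: $[n]=\{1,\dots,n\}$. An $n\times n$ matrix $D$ with non-negative integer entries is a distance matrix if (i) $D_{ii}=0$ for all $i$ and $D_{ij}>0$ for all $i\ne j$; (ii) $D$ is symmetric; (iii) $D_{iw}+D_{wj}\ge D_{ij}$ for all $i,j,w\in[n]$. The associated graph $G_D=(V_D,E_D)$ of $D$ is the simple unweighted graph with $V_D=\{v_1,\dots,v_n\}$ and $\{v_i,v_j\}\in E_D$ if and only if $D_{ij}=1$; $d_{G_D}$ is its shortest-path distance ($\infty$ if no path). For $q\in\mathbb N$, the $q$-skeleton $G^q$ of $D$ is the edge-weighted graph with vertex set $[n]$ having an edge $\{i,j\}$ ($i<j$) if and only if $D_{ij}\le q$, this edge having weight (length) $D_{ij}$; $D^{(q)}$ denotes the $n\times n$ matrix whose $(i,j)$ entry is the weighted shortest-path distance between $i$ and $j$ in $G^q$ ($\infty$ if no path exists). The Boolean formula $\phi_2'$ over variables $x_{i,a}$ ($i\in[n]$, $a\in\{n+1,n+2\}$; meaning ''$v_i$ is adjacent to the new vertex $v_a$'') is the conjunction (written as an equivalent 2-CNF formula) of the following constraints: (1) for all $i,j\in[n]$ with $D_{ij}>2$: $(\neg x_{i,n+1}\vee\neg x_{j,n+1})$ and $(\neg x_{i,n+2}\vee\neg x_{j,n+2})$; (2) for all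 $i,j\in[n]$ with $D_{ij}=2$ and $d_{G_D}(v_i,v_j)>2$: $(x_{i,n+1}\wedge x_{j,n+1})\vee(x_{i,n+2}\wedge x_{j,n+2})$; (3) for all $i,j\in[n]$ with $D_{ij}>3$: $(\neg x_{i,n+1}\vee\neg x_{j,n+2})$ and $(\neg x_{i,n+2}\vee\neg x_{j,n+1})$; (4) for all $i,j\in[n]$ with $D_{ij}=3$ and $D^{(2)}_{ij}>3$: $(x_{i,n+1}\wedge x_{j,n+2})\vee(x_{i,n+2}\wedge x_{j,n+1})$. For a satisfying assignment $\mathbf X$, $G'_{\phi_2',\mathbf X}$ is the simple graph on $\{v_1,\dots,v_{n+2}\}$ whose induced subgraph on $\{v_1,\dots,v_n\}$ is $G_D$, in which $v_{n+1}$ and $v_{n+2}$ are adjacent, and in which $v_a$ ($a\in\{n+1,n+2\}$) is adjacent to $v_i$ ($i\in[n]$) exactly when $x_{i,a}$ is true in $\mathbf X$. $D'(\phi_2',\mathbf X)$ is the $n\times n$ matrix of shortest-path distances in $G'_{\phi_2',\mathbf X}$ between $v_i$ and $v_j$, $i,j\in[n]$ ($\infty$ if no path). *)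

From Stdlib Require Import ClassicalEpsilon.
From mathcomp Require Import all_boot matrix.
Set Implicit Arguments. Unset Strict Implicit. Unset Printing Implicit Defensive.

(* Distances take values in nat extended with infinity: [None] = infinity. *)
Definition extnat := option nat.

Definition gt_ext (d : extnat) (k : nat) : bool :=
  if d is Some m then k < m else true.

(* [w x y = Some c] : there is an edge {x,y} of weight c; [None] : no edge. *)
Definition wadj (V : eqType) (w : V -> V -> option nat) : rel V :=
  fun x y => w x y != None.

Fixpoint walk_weight (V : eqType) (w : V -> V -> option nat) (x : V) (p : seq V)
  : nat :=
  if p is y :: p' then odflt 0 (w x y) + walk_weight w y p' else 0.

Definition walk_of_weight (V : eqType) (w : V -> V -> option nat) (u v : V)
  (k : nat) : Prop :=
  exists p : seq V, [/\ path (wadj w) u p, last u p = v & walk_weight w u p = k].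

Definition walk_of_weightb (V : eqType) (w : V -> V -> option nat) (u v : V)
  (k : nat) : bool :=
  if excluded_middle_informative (walk_of_weight w u v k) then true else false.

Lemma walk_of_weightb_ex (V : eqType) (w : V -> V -> option nat) (u v : V) :
  (exists k, walk_of_weight w u v k) -> exists k, walk_of_weightb w u v k.
Proof.
case=> k Hk; exists k; rewrite /walk_of_weightb.
by case: excluded_middle_informative.
Qed.

Definition spdist (V : eqType) (w : V -> V -> option nat) (u v : V) : extnat :=
  match excluded_middle_informative (exists k, walk_of_weight w u v k) with
  | left H => Some (ex_minn (walk_of_weightb_ex H))
  | right _ => None
  end.

Definition is_distance_matrix (n : nat) (D : 'M[nat]_n) : Prop :=
  [/\ (forall i, D i i = 0),
      (forall i j, i != j -> 0 < D i j),
      (forall i j, D i j = D j i)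
    & (forall i j w, D i j <= D i w + D w j)].

Definition GD_w (n : nat) (D : 'M[nat]_n) (i j : 'I_n) : option nat :=
  if D i j == 1 then Some 1 else None.

Definition dGD (n : nat) (D : 'M[nat]_n) (i j : 'I_n) : extnat :=
  spdist (GD_w D) i j.

Definition skel_w (n : nat) (D : 'M[nat]_n) (q : nat) (i j : 'I_n) : option nat :=
  if (i != j) && (D i j <= q) then Some (D i j) else None.

Definition Dq (n : nat) (D : 'M[nat]_n) (q : nat) : 'M[extnat]_n :=
  \matrix_(i, j) spdist (skel_w D q) i j.

(* Truth assignment: [X i a] is x_{i,a}; a = false stands for n+1,
   a = true stands for n+2. *)
Definition sat_phi2' (n : nat) (D : 'M[nat]_n) (X : 'I_n -> bool -> bool) : Prop :=
  [/\ (* (1) *)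
      (forall i j, 2 < D i j ->
         (~~ X i false || ~~ X j false) && (~~ X i true || ~~ X j true)),
      (* (2) *)
      (forall i j, D i j = 2 -> gt_ext (dGD D i j) 2 ->
         (X i false && X j false) || (X i true && X j true)),
      (* (3) *)
      (forall i j, 3 < D i j ->
         (~~ X i false || ~~ X j true) && (~~ X i true || ~~ X j false))
    & (* (4) *)
      (forall i j, D i j = 3 -> gt_ext (Dq D 2 i j) 3 ->
         (X i false && X j true) || (X i true && X j false))].

(* Vertex set: [inl i] is v_i (i in [n]); [inr false] is v_{n+1};
   [inr true] is v_{n+2}. *)
Definition Gp_adj (n : nat) (D : 'M[nat]_n) (X : 'I_n -> bool -> bool)
  (x y : 'I_n + bool) : bool :=
  match x, y with
  | inl i, inl j => D i j == 1
  | inr a, inr b => a != b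
  | inl i, inr a => X i a
  | inr a, inl i => X i a
  end.

Definition Gp_w (n : nat) (D : 'M[nat]_n) (X : 'I_n -> bool -> bool)
  (x y : 'I_n + bool) : option nat :=
  if Gp_adj D X x y then Some 1 else None.

Definition Dprime (n : nat) (D : 'M[nat]_n) (X : 'I_n -> bool -> bool) : 'M[extnat]_n :=
  \matrix_(i, j) spdist (Gp_w D X) (inl i) (inl j).

From Stdlib Require Import ClassicalEpsilon.
From mathcomp Require Import all_boot matrix zify.

Set Implicit Arguments.
Unset Strict Implicit.
Unset Printing Implicit Defensive.

(* Both distances are compared walk by walk.  A skeleton edge {i,j} of weight
   D_ij <= 3 is realized in G' by a walk of length at most D_ij: directly if
   D_ij = 1; for D_ij = 2 either along a path of G_D or, by (2), through a
   common new vertex; for D_ij = 3 either along a path of G^2 (whose edges are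
   already realized) or, by (4), through both new vertices.  Conversely a walk
   of G' between old vertices is shortened to a walk of G^3 by replacing every
   detour through v_{n+1}, v_{n+2} by a single skeleton edge: by (1) and (3),
   two neighbours of the same new vertex are at D-distance at most 2, and
   neighbours of different new vertices at D-distance at most 3. *)

Definition walk_within (V : eqType) (w : V -> V -> option nat) (u v : V)
    (c : nat) : Prop :=
  exists2 k, k <= c & walk_of_weight w u v k.

Section Walks.
Variables (V : eqType) (w : V -> V -> option nat).

Lemma walk_of_weightbP u v k :
  reflect (walk_of_weight w u v k) (walk_of_weightb w u v k).
Proof. by rewrite /walk_of_weightb; case: excluded_middle_informative; constructor. Qed.

Lemma spdist_walk u v m : spdist w u v = Some m -> walk_of_weight w u v m.
Proof.
rewrite /spdist; case: excluded_middle_informative => // H [<-].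
by case: ex_minnP => m' /walk_of_weightbP.
Qed.

Lemma walk_weight_cat u p q :
  walk_weight w u (p ++ q) = walk_weight w u p + walk_weight w (last u p) q.
Proof. by elim: p u => [|y p IH] u //=; rewrite IH addnA. Qed.

Lemma walk_of_weight_cat u v x k1 k2 :
  walk_of_weight w u v k1 -> walk_of_weight w v x k2 ->
  walk_of_weight w u x (k1 + k2).
Proof.
move=> [p [P1 L1 W1]] [q [P2 L2 W2]]; exists (p ++ q); split.
- by rewrite cat_path P1 L1.
- by rewrite last_cat L1.
- by rewrite walk_weight_cat L1 W1 W2.
Qed.

Lemma walk_within_refl u c : walk_within w u u c.
Proof. by exists 0 => //; exists [::]. Qed.

Lemma walk_within_edge u v c : w u v = Some c -> walk_within w u v c.
Proof. by move=> E; exists c => //; exists [:: v]; rewrite /= /wadj E addn0. Qed.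

Lemma walk_within_le u v a b :
  walk_within w u v a -> a <= b -> walk_within w u v b.
Proof. by move=> [k Hk W] Hab; exists k => //; apply: leq_trans Hab. Qed.

Lemma walk_within_cat u v x a b :
  walk_within w u v a -> walk_within w v x b -> walk_within w u x (a + b).
Proof.
move=> [k1 H1 W1] [k2 H2 W2]; exists (k1 + k2); first exact: leq_add.
exact: walk_of_weight_cat W1 W2.
Qed.

End Walks.

Lemma walk_within_map (V1 V2 : eqType) (w1 : V1 -> V1 -> option nat)
    (w2 : V2 -> V2 -> option nat) (f : V1 -> V2) :
  (forall x y c, w1 x y = Some c -> walk_within w2 (f x) (f y) c) ->
  forall u v k, walk_of_weight w1 u v k -> walk_within w2 (f u) (f v) k.
Proof.
move=> Hedge u v k [p [Hp <- <-]] {v k}.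
elim: p u Hp => [|y p IH] u /=; first by move=> _; apply: walk_within_refl.
rewrite {1}/wadj; case Euy: (w1 u y) => [c|] //= /IH.
exact: walk_within_cat (Hedge _ _ _ Euy).
Qed.

Lemma eq_spdist (V1 V2 : eqType) (w1 : V1 -> V1 -> option nat)
    (w2 : V2 -> V2 -> option nat) u1 v1 u2 v2 :
  (forall k, walk_of_weight w1 u1 v1 k -> walk_within w2 u2 v2 k) ->
  (forall k, walk_of_weight w2 u2 v2 k -> walk_within w1 u1 v1 k) ->
  spdist w1 u1 v1 = spdist w2 u2 v2.
Proof.
move=> A B; rewrite /spdist.
case: excluded_middle_informative => H1; case: excluded_middle_informative => H2.
- congr Some.
  case: ex_minnP => m1 /walk_of_weightbP W1 M1.
  case: ex_minnP => m2 /walk_of_weightbP W2 M2.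
  have [k1 Hk1 /(introT (walk_of_weightbP _ _ _ _)) /M2 ?] := A _ W1.
  have [k2 Hk2 /(introT (walk_of_weightbP _ _ _ _)) /M1 ?] := B _ W2.
  lia.
- by exfalso; case: H1 => k /A [k' _ W]; case: H2; exists k'.
- by exfalso; case: H2 => k /B [k' _ W]; case: H1; exists k'.
- by [].
Qed.

Section Realization.
Variables (n : nat) (D : 'M[nat]_n) (X : 'I_n -> bool -> bool).
Hypothesis HD : is_distance_matrix D.
Hypothesis HS : sat_phi2' D X.

Local Notation Gp := (Gp_w D X).

Lemma eq_of_dist0 i j : D i j = 0 -> i = j.
Proof. by case: HD => _ Hpos _ _; case: (eqVneq i j) => // /Hpos; lia. Qed.

Lemma skel_within q i j c : D i j <= c -> c <= q -> walk_within (skel_w D q) i j c.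
Proof.
case: (eqVneq i j) => [->|neq_ij] Hc Hq; first exact: walk_within_refl.
have Hij : skel_w D q i j = Some (D i j) by rewrite /skel_w neq_ij (leq_trans Hc Hq).
exact: walk_within_le (walk_within_edge Hij) Hc.
Qed.

Lemma Gp_wadj x y : wadj Gp x y = Gp_adj D X x y.
Proof. by rewrite /wadj /Gp_w; case: Gp_adj. Qed.

Lemma Gp_walk_weight x p : path (wadj Gp) x p -> walk_weight Gp x p = size p.
Proof.
elim: p x => //= y p IH x /andP [Hxy Hp].
by rewrite IH // /Gp_w -Gp_wadj Hxy.
Qed.

Lemma common_hub_dist i j a : X i a -> X j a -> D i j <= 2.
Proof.
case: HS => C1 _ _ _ Hi Hj; rewrite leqNgt; apply/negP => /C1.
by case: a Hi Hj => -> -> /=; rewrite ?andbF.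
Qed.

Lemma opposite_hubs_dist i j a : X i a -> X j (~~ a) -> D i j <= 3.
Proof.
case: HS => _ _ C3 _ Hi Hj; rewrite leqNgt; apply/negP => /C3.
by case: a Hi Hj => -> -> /=; rewrite ?andbF.
Qed.

Lemma common_hub_of_dist2 i j :
  D i j = 2 -> gt_ext (dGD D i j) 2 -> exists a, X i a && X j a.
Proof.
case: HS => _ C2 _ _ H2 Hg.
by case/orP: (C2 _ _ H2 Hg) => ?; [exists false | exists true].
Qed.

Lemma opposite_hubs_of_dist3 i j :
  D i j = 3 -> gt_ext (Dq D 2 i j) 3 -> exists a, X i a && X j (~~ a).
Proof.
case: HS => _ _ _ C4 H3 Hg.
by case/orP: (C4 _ _ H3 Hg) => ?; [exists false | exists true].
Qed.

Lemma dGD_walk_within_Gp i j k :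
  walk_of_weight (GD_w D) i j k -> walk_within Gp (inl i) (inl j) k.
Proof.
apply: walk_within_map => x y c; rewrite /GD_w.
by case: ifP => // Hxy [<-]; apply: walk_within_edge; rewrite /Gp_w /= Hxy.
Qed.

Lemma skel_walk_within_Gp q :
  (forall i j, D i j <= q -> walk_within Gp (inl i) (inl j) (D i j)) ->
  forall i j k, walk_of_weight (skel_w D q) i j k -> walk_within Gp (inl i) (inl j) k.
Proof.
move=> Hq; apply: walk_within_map => x y c; rewrite /skel_w.
by case: ifP => // /andP [_ Hxy] [<-]; apply: Hq.
Qed.

Lemma Gp_within_dist2 i j : D i j <= 2 -> walk_within Gp (inl i) (inl j) (D i j).
Proof.
move=> Hle; have : D i j = 0 \/ D i j = 1 \/ D i j = 2 by lia.
case=> [/eq_of_dist0 ->|[H1|H2]]; first exact: walk_within_refl.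
  by apply: walk_within_edge; rewrite /Gp_w /= H1.
case Hg: (gt_ext (dGD D i j) 2).
  have [a /andP [Hi Hj]] := common_hub_of_dist2 H2 Hg.
  rewrite H2 -[2]/(1 + 1).
  by apply: (@walk_within_cat _ _ _ (inr a)); apply: walk_within_edge;
    rewrite /Gp_w /= ?Hi ?Hj.
move: Hg; rewrite /gt_ext /dGD; case E: spdist => [m|] // Hm.
by apply: walk_within_le (dGD_walk_within_Gp (spdist_walk E)) _; lia.
Qed.

Lemma Gp_within_dist3 i j : D i j <= 3 -> walk_within Gp (inl i) (inl j) (D i j).
Proof.
move=> Hle; case: (leqP (D i j) 2) => [|H2]; first exact: Gp_within_dist2.
have H3 : D i j = 3 by lia.
case Hg: (gt_ext (Dq D 2 i j) 3).
  have [a /andP [Hi Hj]] := opposite_hubs_of_dist3 H3 Hg.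
  rewrite H3 -[3]/(1 + 1 + 1).
  apply: (@walk_within_cat _ _ _ (inr (~~ a))); last first.
    by apply: walk_within_edge; rewrite /Gp_w /= Hj.
  apply: (@walk_within_cat _ _ _ (inr a)); apply: walk_within_edge.
    by rewrite /Gp_w /= Hi.
  by rewrite /Gp_w /=; case: a {Hi Hj}.
move: Hg; rewrite /gt_ext mxE; case E: spdist => [m|] // Hm.
have := skel_walk_within_Gp Gp_within_dist2 (spdist_walk E).
by move/walk_within_le; apply; lia.
Qed.

(* x is v_u (d = 0), a new vertex adjacent to v_u (d = 1), or a new vertex
   whose partner is adjacent to v_u (d = 2); d is the length of a walk of G'
   from v_u to x, which the skeleton walk built below is allowed to spend. *)
Definition anchored (u : 'I_n) (x : 'I_n + bool) (d : nat) : bool :=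
  match x with
  | inl v => (v == u) && (d == 0)
  | inr a => (X u a && (d == 1)) || (X u (~~ a) && (d == 2))
  end.

Lemma anchored_refl u : anchored u (inl u) 0.
Proof. by rewrite /= !eqxx. Qed.

Lemma anchored_step u x y d : Gp_adj D X x y -> anchored u x d ->
  if y is inl v then walk_within (skel_w D 3) u v d.+1
  else exists2 d', d' <= d.+1 & anchored u y d'.
Proof.
case: x y => [w|a] [v|b] /=.
- by move=> /eqP Hwv /andP [/eqP <- /eqP ->]; apply: skel_within; rewrite ?Hwv.
- by move=> Hwb /andP [/eqP <- /eqP ->]; exists 1; rewrite //= Hwb.
- move=> Hva /orP [] /andP [Hua /eqP ->]; apply: skel_within => //.
    exact: common_hub_dist Hua Hva.
  by apply: opposite_hubs_dist Hua _; rewrite negbK Hva.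
- move=> neq_ab; have -> : b = ~~ a by case: a b neq_ab => [] [].
  move=> /orP [] /andP [Hu /eqP ->]; first by exists 2; rewrite //= negbK Hu orbT.
  by exists 1; rewrite //= Hu.
Qed.

Lemma Gp_walk_within_skel p x u v d :
  path (wadj Gp) x p -> last x p = inl v -> anchored u x d ->
  walk_within (skel_w D 3) u v (size p + d).
Proof.
elim: p x u d => [|y p IH] x u d /=.
  by move=> _ -> /andP [/eqP -> _]; apply: walk_within_refl.
rewrite Gp_wadj => /andP [Hxy Hp] Hl /(anchored_step Hxy).
case: y Hp Hl {Hxy} => [w|b] Hp Hl.
  move=> Huw; have Hwv := IH (inl w) w 0 Hp Hl (anchored_refl w).
  apply: walk_within_le (walk_within_cat Huw Hwv) _.
  by rewrite addn0 addnC addSn addnS.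
move=> [d' Hd' Hb]; apply: walk_within_le (IH _ _ _ Hp Hl Hb) _.
by rewrite addSn -addnS leq_add2l.
Qed.

End Realization.

Theorem mainTheorem16 (n : nat) (D : 'M[nat]_n) (X : 'I_n -> bool -> bool) :
  is_distance_matrix D -> sat_phi2' D X -> Dprime D X = Dq D 3.
Proof.
move=> HD HS; apply/matrixP => i j; rewrite !mxE; apply: eq_spdist => k.
- move=> [p [Hp Hl <-]]; rewrite (Gp_walk_weight Hp).
  have := Gp_walk_within_skel HS Hp Hl (anchored_refl X i).
  by rewrite addn0.
- by apply: skel_walk_within_Gp => x y; apply: Gp_within_dist3.
Qed.
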